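(* Let $p\ge 1$, $s>0$ and $\lambda>0$. Let $\tilde{W}\in\mathbb{R}^{p\times p}$. Let $\hat{W}$ be a projection of $\tilde{W}$ onto the $\log\det$ level set $\mathcal{D}_s:=\{W\in\mathbb{W}^s: h_s(W)=0\}$, i.e. $\hat W\in\arg\min_{W\in\mathcal{D}_s}\tfrac12\|\tilde W-W\|_F^2$, and let $W^\star$ be the (Euclidean/Frobenius) projection of $\hat{W}$ onto the $\ell_1$ ball $\mathcal{B}_\lambda:=\{W\in\mathbb{R}^{p\times p}:\|W\|_{\ell_1}\le\lambda\}$. Then $W^\star$ lies in the intersection $\mathcal{D}_s\cap\mathcal{B}_\lambda$, i.e. $W^\star\in\mathbb{W}^s$, $h_s(W^\star)=0$ and $\|W^\star\|_{\ell_1}\le\lambda$.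
   Context: For $W\in\mathbb{R}^{p\times p}$, $W\circ W$ denotes the entrywise (Hadamard) square, $\rho(\cdot)$ the spectral radius, and $\|W\|_{\ell_1}:=\sum_{j,k}|\mathsf{w}_{jk}|$. Define $\mathbb{W}^s:=\{W\in\mathbb{R}^{p\times p}:\rho(W\circ W)<s\}$ and, for $W\in\mathbb{W}^s$, $h_s(W):=-\log\det(sI-W\circ W)+p\log(s)$. (It is known that for $W\in\mathbb{W}^s$, $h_s(W)=0$ iff the directed graph with weighted adjacency matrix $W$ — an edge $j\to k$ iff $\mathsf{w}_{jk}\neq0$ — is acyclic.) *)

From mathcomp Require Import all_boot all_order all_algebra.
From mathcomp Require Import complex.
From mathcomp Require Import reals exp.
Set Implicit Arguments. Unset Strict Implicit. Unset Printing Implicit Defensive.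
Import Order.TTheory GRing.Theory Num.Theory.
Local Open Scope ring_scope.

Section Defs.
Variable R : realType.
Variable p : nat.

Definition hsq (W : 'M[R]_p) : 'M[R]_p := \matrix_(j, k) (W j k ^+ 2).

Definition spec_rad_lt (A : 'M[R]_p) (s : R) : Prop :=
  forall z : R[i], eigenvalue (map_mx (fun x : R => (x%:C)%C) A) z -> `|z| < (s%:C)%C.

Definition Wset (s : R) (W : 'M[R]_p) : Prop := spec_rad_lt (hsq W) s.

Definition h_s (s : R) (W : 'M[R]_p) : R :=
  - ln (\det (s%:M - hsq W)) + p%:R * ln s.

Definition Dset (s : R) (W : 'M[R]_p) : Prop := Wset s W /\ h_s s W = 0.

Definition l1norm (W : 'M[R]_p) : R := \sum_j \sum_k `|W j k|.

Definition Bball (lam : R) (W : 'M[R]_p) : Prop := l1norm W <= lam.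

Definition frob2 (A B : 'M[R]_p) : R := \sum_j \sum_k (A j k - B j k) ^+ 2.

Definition is_proj (C : 'M[R]_p -> Prop) (Y X : 'M[R]_p) : Prop :=
  C X /\ forall W, C W -> frob2 Y X / 2 <= frob2 Y W / 2.
End Defs.

From mathcomp Require Import all_boot all_order all_algebra.
From mathcomp Require Import complex.
From mathcomp Require Import reals exp.
From mathcomp Require Import polyrcf lra.
Set Implicit Arguments. Unset Strict Implicit. Unset Printing Implicit Defensive.
Import Order.TTheory GRing.Theory Num.Theory.
Local Open Scope ring_scope.

(* The l1-ball projection only shrinks entries in absolute value, so
   0 <= Wstar o Wstar <= A := What o What entrywise.  Since rho(A) < s,
   det(rI - A) > 0 for all r >= s, i.e. rI - A is a nonsingular M-matrix.
   Splitting off the first row and column, det(rI - A) is det(rI - D) times the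
   Schur complement r - a - b (rI - D)^-1 c <= r, where (rI - D)^-1 >= 0; by
   induction on the size, det(rI - A) <= r^p, and equality at r = s forces
   a = 0, b (rI - D)^-1 c = 0 and the same equality for D at every r >= s, so
   char_poly A = X^p.  Hence A is nilpotent, so is the smaller nonnegative
   Wstar o Wstar, and all eigenvalues of the latter vanish: rho(Wstar o Wstar)
   = 0 < s and det(sI - Wstar o Wstar) = s^p. *)

Section RealPolynomials.
Variable R : rcfType.
Implicit Types (q : {poly R}) (x y : R).

Lemma monic_horner_gt0 q x : q \is monic ->
  (forall z, x <= z -> ~~ root q z) -> 0 < q.[x].
Proof.
move=> q_monic qN0.
have qN0_itv : {in `[x, +oo[, forall z, ~~ root q z}.
  by move=> z; rewrite in_itv /= andbT; apply: qN0.
have := @sgp_pinftyP R x q qN0_itv x.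
rewrite /sgp_pinfty (monicP q_monic) sgr1 in_itv /= lexx => /(_ isT) /eqP.
by rewrite sgr_cp0.
Qed.

Lemma monic_max_root q x : q \is monic -> q.[x] <= 0 ->
  exists2 y, x <= y /\ root q y & forall z, y < z -> 0 < q.[z].
Proof.
move=> q_monic qx_le0.
set B := Num.max x (cauchy_bound q) + 1.
have gt0_below_B z : (forall u, z <= u -> u < B -> ~~ root q u) -> 0 < q.[z].
  move=> qN0; apply: monic_horner_gt0 => // u zu.
  have [uB|Bu] := ltP u B; first exact: qN0.
  apply: ge_cauchy_bound; first exact: monic_neq0.
  by rewrite in_itv /= andbT (le_trans _ Bu) // /B ler_wpDr // le_max lexx orbT.
case: (prev_rootP q (x - 1) B) => [/eqP|y _ /rootP qy0 y_in rootN_y|_ _ _ qN0].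
- by rewrite (negPf (monic_neq0 q_monic)).
- have xy : x <= y.
    rewrite leNgt; apply/negP => yx; suff : 0 < q.[x] by rewrite ltNge qx_le0.
    apply: gt0_below_B => u xu uB; apply: rootN_y.
    by rewrite in_itv /= uB (lt_le_trans yx xu).
  exists y => // z yz; apply: gt0_below_B => u zu uB; apply: rootN_y.
  by rewrite in_itv /= uB (lt_le_trans yz zu).
- suff : 0 < q.[x] by rewrite ltNge qx_le0.
  apply: gt0_below_B => u xu uB; apply: qN0.
  by rewrite in_itv /= uB andbT (lt_le_trans _ xu) // gtrBl.
Qed.

Lemma horner_le0_right q y : (forall z, y < z -> q.[z] <= 0) -> q.[y] <= 0.
Proof.
move=> le0_right; rewrite leNgt; apply/negP => qy_gt0.
have [d d_gt0 near_y] := poly_cont y q qy_gt0.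
have : `|q.[y + d / 2] - q.[y]| < q.[y].
  apply: near_y; rewrite addrAC subrr add0r ger0_norm ?divr_ge0 ?ltW //.
  by rewrite ltr_pdivrMr // ltr_pMr // ltr1n.
have : q.[y + d / 2] <= 0 by apply: le0_right; rewrite ltrDl divr_gt0.
by rewrite ltr_norml => ? /andP[]; lra.
Qed.

Lemma poly_eq0_halfline q s : (forall r, s <= r -> q.[r] = 0) -> q = 0.
Proof.
move=> q_eq0; apply: (@roots_geq_poly_eq0 _ q [seq s + i%:R | i <- iota 0 (size q)]).
- by apply/allP => _ /mapP[i _ ->]; apply/rootP/q_eq0; rewrite lerDl ler0n.
- by rewrite map_inj_uniq ?iota_uniq // => i j /addrI /eqP; rewrite eqr_nat => /eqP.
- by rewrite size_map size_iota.
Qed.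

End RealPolynomials.

Section NonnegativeMatrices.
Variable R : numDomainType.

Definition nnegmx m n (M : 'M[R]_(m, n)) := forall i j, 0 <= M i j.

Lemma nnegmx_mul m n k (A : 'M[R]_(m, n)) (B : 'M[R]_(n, k)) :
  nnegmx A -> nnegmx B -> nnegmx (A *m B).
Proof. by move=> A_ge0 B_ge0 i j; rewrite mxE sumr_ge0 // => l _; rewrite mulr_ge0. Qed.

Lemma nnegmx_add m n (A B : 'M[R]_(m, n)) : nnegmx A -> nnegmx B -> nnegmx (A + B).
Proof. by move=> A_ge0 B_ge0 i j; rewrite mxE addr_ge0. Qed.

Lemma nnegmx_col m1 m2 n (u : 'M[R]_(m1, n)) (v : 'M[R]_(m2, n)) :
  nnegmx (col_mx u v) <-> nnegmx u /\ nnegmx v.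
Proof.
split=> [uv_ge0|[u_ge0 v_ge0] i j]; last by rewrite mxE; case: splitP.
by split=> i j; [move: (uv_ge0 (lshift m2 i) j); rewrite col_mxEu
                |move: (uv_ge0 (rshift m1 i) j); rewrite col_mxEd].
Qed.

Lemma nnegmx_exp_le n (A B : 'M[R]_n) : nnegmx B -> (forall i j, B i j <= A i j) ->
  forall k i j, 0 <= (B ^+ k) i j <= (A ^+ k) i j.
Proof.
move=> B_ge0 BA; elim=> [|k IHk] i j; first by rewrite !expr0 mxE lexx andbT ler0n.
rewrite !exprS -!mulmxE !mxE; apply/andP; split.
  by apply: sumr_ge0 => l _; case/andP: (IHk l j) => Bk_ge0 _; rewrite mulr_ge0.
by apply: ler_sum => l _; case/andP: (IHk l j) => Bk_ge0 BAk; rewrite ler_pM.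
Qed.

End NonnegativeMatrices.

Lemma horner_char_poly (R : comNzRingType) n (A : 'M[R]_n) r :
  (char_poly A).[r] = \det (r%:M - A).
Proof.
rewrite /char_poly -horner_evalE -det_map_mx; congr (\det _).
by apply/matrixP => i j; rewrite !mxE /= horner_evalE; case: eqP; rewrite /= !hornerE.
Qed.

Lemma det_block_schur (R : comUnitRingType) m (x : 'M[R]_1) (u : 'M[R]_(1, m))
    (v : 'M[R]_(m, 1)) (Y : 'M[R]_m) : Y \in unitmx ->
  \det (block_mx x u v Y) = \det Y * (x - u *m invmx Y *m v) 0 0.
Proof.
move=> Y_unit.
have -> : block_mx x u v Y = block_mx 1%:M (u *m invmx Y) 0 1%:M *m
                             block_mx (x - u *m invmx Y *m v) 0 v Y.
  by rewrite mulmx_block !mul1mx !mul0mx !add0r ?addr0 subrK -mulmxA mulVmx ?mulmx1.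
by rewrite det_mulmx det_ublock det_lblock !det1 det_mx11 !mul1r mulrC.
Qed.

Lemma det_gt0_unitmx (R : numFieldType) n (M : 'M[R]_n) : 0 < \det M -> M \in unitmx.
Proof. by move=> det_gt0; rewrite unitmxE unitfE gt_eqF. Qed.

Lemma scalar_mx_subB (R : pzRingType) n (a : 'M[R]_1) (b : 'M[R]_(1, n)) c D r :
  r%:M - block_mx a b c D = block_mx (r%:M - a) (- b) (- c) (r%:M - D).
Proof. by rewrite (scalar_mx_block 1 n r) opp_block_mx add_block_mx !add0r. Qed.

(* For nonnegative [A], [det_pos_from A t] holds exactly when [t] exceeds the
   spectral radius, i.e. when [t%:M - A] is a nonsingular M-matrix; [monotonemx]
   is inverse-positivity in Collatz's sense. *)
Section MMatrices.
Variable R : rcfType.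

Definition monotonemx n (M : 'M[R]_n) := forall v : 'cV_n, nnegmx (M *m v) -> nnegmx v.

Definition det_pos_from n (A : 'M[R]_n) t := forall r, t <= r -> 0 < \det (r%:M - A).

Definition Mmatrix_spec n (A : 'M[R]_n) t := [/\ monotonemx (t%:M - A),
  \det (t%:M - A) <= t ^+ n & \det (t%:M - A) = t ^+ n -> char_poly A = 'X^n].

Lemma det_pos_fromW n (A : 'M[R]_n) t r : t <= r -> det_pos_from A t -> det_pos_from A r.
Proof. by move=> tr A_pos r' rr'; apply: A_pos (le_trans tr rr'). Qed.

Lemma monotonemx_inv_nneg n (M : 'M[R]_n) (u : 'cV_n) : M \in unitmx ->
  monotonemx M -> nnegmx u -> nnegmx (invmx M *m u).
Proof. by move=> M_unit mono u_ge0; apply: mono; rewrite mulmxA mulmxV ?mul1mx. Qed.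

Section BlockStep.
Variables (n : nat) (a : 'M[R]_1) (b : 'M[R]_(1, n)) (c : 'M[R]_(n, 1)) (D : 'M[R]_n).
Hypotheses (a_ge0 : nnegmx a) (b_ge0 : nnegmx b) (c_ge0 : nnegmx c).
Hypothesis IH_D : forall r, 0 < r -> det_pos_from D r -> Mmatrix_spec D r.

Local Notation A := (block_mx a b c D : 'M_(1 + n)).
Let w r := invmx (r%:M - D) *m c.
Let schur r := r - a 0 0 - (b *m w r) 0 0.

Lemma det_block_sub r : 0 < \det (r%:M - D) ->
  \det (r%:M - A) = \det (r%:M - D) * schur r.
Proof.
move=> D_gt0; rewrite scalar_mx_subB det_block_schur ?det_gt0_unitmx //.
by rewrite mulmxN !mulNmx opprK -mulmxA /schur /w !mxE eqxx mulr1n.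
Qed.

Lemma resolvent_nneg r :
  0 < \det (r%:M - D) -> monotonemx (r%:M - D) -> nnegmx (w r).
Proof. by move=> D_gt0 mono; apply: monotonemx_inv_nneg; rewrite ?det_gt0_unitmx. Qed.

Lemma det_pos_from_drsub t : 0 < t -> det_pos_from A t -> det_pos_from D t.
Proof.
move=> t_gt0 A_pos r1 tr1; rewrite ltNge -horner_char_poly; apply/negP.
move=> /(monic_max_root (char_poly_monic D)) [y [r1y /rootP char_y] char_gt0].
have D_pos z : y < z -> det_pos_from D z.
  by move=> yz r zr; rewrite -horner_char_poly char_gt0 // (lt_le_trans yz zr).
(* g = - det(zI - D) * b (zI - D)^-1 c <= 0 beyond the largest root y of
   char_poly D, while g(y) = det(yI - A) > 0. *)
pose g := char_poly A - ('X - (a 0 0)%:P) * char_poly D.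
have g_le0 z : y < z -> g.[z] <= 0.
  move=> yz; have z_gt0 : 0 < z.
    by rewrite (lt_le_trans t_gt0) // (le_trans tr1) // (le_trans r1y) ?ltW.
  have [mono _ _] := IH_D z_gt0 (D_pos z yz).
  have Dz_gt0 := D_pos z yz z (lexx z).
  have := nnegmx_mul b_ge0 (resolvent_nneg Dz_gt0 mono) 0 0.
  rewrite /g hornerD hornerN hornerM !horner_char_poly det_block_sub // /schur !hornerE.
  by move: Dz_gt0; nra.
have := horner_le0_right g_le0.
rewrite /g hornerD hornerN hornerM char_y mulr0 subr0 horner_char_poly.
by rewrite leNgt A_pos // (le_trans tr1 r1y).
Qed.

Lemma monotonemx_block t : 0 < \det (t%:M - A) -> 0 < \det (t%:M - D) ->
  monotonemx (t%:M - D) -> monotonemx (t%:M - A).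
Proof.
move=> A_gt0 D_gt0 mono v; rewrite -[v]vsubmxK scalar_mx_subB mul_block_col.
set v0 := usubmx v; set v1 := dsubmx v.
have D_unit := det_gt0_unitmx D_gt0.
move=> /nnegmx_col[top_ge0 /(monotonemx_inv_nneg D_unit mono) u_ge0].
set u := invmx _ *m _ in u_ge0.
have v1E : v1 = u + w t *m v0.
  by rewrite /u /w -mulmxA -mulmxDr mulNmx addrAC addNr add0r mulmxA mulVmx ?mul1mx.
have v0_ge0 : 0 <= v0 0 0.
  have top_eq : (t%:M - a) *m v0 + - b *m v1 = (t%:M - a - b *m w t) *m v0 - b *m u.
    by rewrite v1E mulmxDr !mulNmx [b *m (_ *m v0)]mulmxA [in RHS]mulmxBl addrA addrAC.
  have := top_ge0 0 0; have := nnegmx_mul b_ge0 u_ge0 0 0.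
  have : 0 < schur t by move: A_gt0; rewrite det_block_sub // pmulr_rgt0.
  rewrite /schur top_eq; move: (b *m u) (b *m w t) (v0) => bu bw x.
  by rewrite !mxE big_ord1 !mxE eqxx mulr1n; nra.
apply/nnegmx_col; split=> [i j|]; first by rewrite !ord1.
rewrite v1E; apply: nnegmx_add => //.
by apply: nnegmx_mul; [exact: resolvent_nneg | move=> i j; rewrite !ord1].
Qed.

Lemma resolvent_antitone t r : 0 < t -> t <= r -> det_pos_from D t ->
  nnegmx (w t - w r).
Proof.
move=> t_gt0 tr D_pos; have r_gt0 := lt_le_trans t_gt0 tr.
have [mono_t _ _] := IH_D t_gt0 D_pos.
have [mono_r _ _] := IH_D r_gt0 (det_pos_fromW tr D_pos).
have wE s : t <= s -> (s%:M - D) *m w s = c.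
  by move=> ts; rewrite mulmxA mulmxV ?mul1mx // det_gt0_unitmx ?D_pos.
apply: mono_t => i j.
have -> : (t%:M - D) *m (w t - w r) = (r - t) *: w r.
  rewrite mulmxBr wE //.
  have -> : t%:M - D = (r%:M - D) - (r - t)%:M by rewrite raddfB /= opprB addrAC subrKC.
  by rewrite mulmxBl wE // mul_scalar_mx opprB subrKC.
by rewrite mxE mulr_ge0 ?subr_ge0 // (resolvent_nneg (D_pos r tr)).
Qed.

Lemma Mmatrix_spec_block t : 0 < t -> det_pos_from A t -> Mmatrix_spec A t.
Proof.
move=> t_gt0 A_pos; have D_pos := det_pos_from_drsub t_gt0 A_pos.
have [mono_t det_D_le char_D] := IH_D t_gt0 D_pos.
have D_gt0 := D_pos t (lexx t); have A_gt0 := A_pos t (lexx t).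
have bw_ge0 r : t <= r -> 0 <= (b *m w r) 0 0.
  move=> tr; have [mono_r _ _] := IH_D (lt_le_trans t_gt0 tr) (det_pos_fromW tr D_pos).
  exact: nnegmx_mul b_ge0 (resolvent_nneg (D_pos r tr) mono_r) 0 0.
have schur_gt0 : 0 < schur t by move: A_gt0; rewrite det_block_sub // pmulr_rgt0.
have schur_le : schur t <= t.
  by rewrite /schur; have := a_ge0 0 0; have := bw_ge0 t (lexx t); lra.
split.
- exact: monotonemx_block.
- by rewrite det_block_sub // exprS mulrC ler_pM // ?ltW.
rewrite det_block_sub // exprS => det_eq.
have [det_D_eq schur_eq] : \det (t%:M - D) = t ^+ n /\ schur t = t.
  have tn_gt0 : 0 < t ^+ n := exprn_gt0 n t_gt0.
  by move: det_eq det_D_le schur_le schur_gt0 D_gt0 tn_gt0; split; nra.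
have bw_t0 : (b *m w t) 0 0 = 0.
  by move: schur_eq; rewrite /schur; have := a_ge0 0 0; have := bw_ge0 t (lexx t); lra.
have a0 : a 0 0 = 0 by move: schur_eq; rewrite /schur bw_t0; lra.
have bw_r0 r : t <= r -> (b *m w r) 0 0 = 0.
  move=> tr; apply/eqP; rewrite eq_le bw_ge0 // andbT -bw_t0 -subr_ge0.
  have := nnegmx_mul b_ge0 (resolvent_antitone t_gt0 tr D_pos) 0 0.
  by rewrite mulmxBr !mxE.
apply/eqP; rewrite -subr_eq0; apply/eqP/(poly_eq0_halfline (s := t)) => r tr.
rewrite hornerD hornerN horner_char_poly det_block_sub ?D_pos //.
rewrite -horner_char_poly (char_D det_D_eq) /schur a0 bw_r0 //.
by rewrite !hornerXn !subr0 exprS mulrC subrr.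
Qed.

End BlockStep.

Lemma nnegmx_Mmatrix_spec n (A : 'M[R]_n) t :
  nnegmx A -> 0 < t -> det_pos_from A t -> Mmatrix_spec A t.
Proof.
elim: n A t => [|n IHn] A t A_ge0 t_gt0 A_pos.
  by split=> [v _ [] //||]; rewrite ?det_mx00 ?expr0 // /char_poly det_mx00.
have -> : A = block_mx (ulsubmx (A : 'M_(1 + n))) (ursubmx (A : 'M_(1 + n)))
                       (dlsubmx (A : 'M_(1 + n))) (drsubmx (A : 'M_(1 + n))).
  by rewrite submxK.
apply: Mmatrix_spec_block => //; try by move=> i j; rewrite !mxE; apply: A_ge0.
- by move=> r r_gt0; apply: IHn => // i j; rewrite !mxE; apply: A_ge0.
- by rewrite submxK.
Qed.

End MMatrices.

Lemma nilpotent_nnegmx_le (R : numDomainType) n (A B : 'M[R]_n) k :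
  nnegmx B -> (forall i j, B i j <= A i j) -> A ^+ k = 0 -> B ^+ k = 0.
Proof.
move=> B_ge0 BA A_nil; apply/matrixP => i j; apply/eqP.
by have := nnegmx_exp_le B_ge0 BA k i j; rewrite A_nil mxE -eq_le eq_sym.
Qed.

Lemma char_poly_X_nilpotent (R : comNzRingType) n (A : 'M[R]_n.+1) :
  char_poly A = 'X^(n.+1) -> A ^+ n.+1 = 0.
Proof.
by move=> charA; have := Cayley_Hamilton A; rewrite charA rmorphXn /= horner_mx_X.
Qed.

Lemma eigenvalue_nilpotent (F : fieldType) n (B : 'M[F]_n) k z :
  B ^+ k = 0 -> eigenvalue B z -> z = 0.
Proof.
move=> B_nil /eigenvalueP[v vB v_neq0].
have vBk i : v *m B ^+ i = z ^+ i *: v.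
  elim: i => [|i IHi]; first by rewrite expr0 scale1r mulmx1.
  by rewrite exprSr mulmxA IHi -scalemxAl vB scalerA exprSr.
have := vBk k; rewrite B_nil mulmx0 => /esym/eqP.
by rewrite scaler_eq0 (negPf v_neq0) orbF expf_eq0 => /andP[_ /eqP].
Qed.

Lemma char_poly_nilpotent (F : closedFieldType) n (B : 'M[F]_n) k :
  B ^+ k = 0 -> char_poly B = 'X^n.
Proof.
move=> B_nil; have [rs charB] := closed_field_poly_normal (char_poly B).
rewrite (monicP (char_poly_monic B)) scale1r in charB.
have rs0 : all (pred1 0) rs.
  apply/allP => z z_rs; apply/eqP/(eigenvalue_nilpotent B_nil).
  by rewrite eigenvalue_root_char charB root_prod_XsubC.
have size_rs : size rs = n.
  by have := size_char_poly B; rewrite charB size_prod_XsubC => -[].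
rewrite charB -size_rs; elim: rs rs0 {charB size_rs} => [_|z rs IHrs /= /andP[/eqP-> rs0]].
  by rewrite big_nil expr0.
by rewrite big_cons subr0 IHrs // exprS.
Qed.

Lemma char_poly_nilpotent_rcf (R : rcfType) n (B : 'M[R]_n) k :
  B ^+ k = 0 -> char_poly B = 'X^n.
Proof.
move=> B_nil; apply: (@map_poly_inj _ _ (real_complex R)).
rewrite map_char_poly (char_poly_nilpotent (k := k)) ?map_polyXn //.
by rewrite -rmorphXn B_nil rmorph0.
Qed.

Section LogDetLevelSet.
Variables (R : realType) (p : nat).
Implicit Types (s : R) (W : 'M[R]_p).

Lemma hsq_ge0 W : nnegmx (hsq W).
Proof. by move=> i j; rewrite mxE sqr_ge0. Qed.

Lemma Wset_det_pos_from s W : 0 < s -> Wset s W -> det_pos_from (hsq W) s.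
Proof.
move=> s_gt0 W_spec r sr; rewrite -horner_char_poly.
apply: monic_horner_gt0 (char_poly_monic _) _ => z rz; have sz := le_trans sr rz.
apply/negP; rewrite -eigenvalue_root_char -(eigenvalue_map (real_complex R)) => /W_spec.
by rewrite ger0_norm ?lecR ?(le_trans (ltW s_gt0)) // ltcR ltNge sz.
Qed.

Lemma Wset_nilpotent s W k : 0 < s -> hsq W ^+ k = 0 -> Wset s W.
Proof.
move=> s_gt0 W_nil z.
have : map_mx (real_complex R) (hsq W) ^+ k = 0 by rewrite -rmorphXn W_nil rmorph0.
by move=> /eigenvalue_nilpotent/[apply] ->; rewrite normr0 ltcR.
Qed.

Lemma h_s_eq0P s W : 0 < s -> 0 < \det (s%:M - hsq W) ->
  h_s s W = 0 <-> \det (s%:M - hsq W) = s ^+ p.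
Proof.
move=> s_gt0 det_gt0; rewrite /h_s mulr_natl -lnXn //.
split=> [h_eq0|->]; last by rewrite addNr.
by apply: ln_inj; rewrite ?posrE ?exprn_gt0 //; lra.
Qed.

Lemma proj_l1ball_shrink lam W0 W : is_proj (Bball lam) W0 W ->
  forall j k, `|W j k| <= `|W0 j k|.
Proof.
move=> [W_ball W_min] j0 k0; rewrite leNgt; apply/negP => grown.
pose W' := \matrix_(j, k) (if `|W0 j k| < `|W j k| then W0 j k else W j k).
have W'_ball : Bball lam W'.
  apply: le_trans W_ball; apply: ler_sum => j _; apply: ler_sum => k _.
  by rewrite mxE; case: ifP => // /ltW.
have := W_min W' W'_ball; rewrite ler_pM2r ?invr_gt0 ?ltr0n //; apply/negP; rewrite -ltNge.
have entry_le j k : (W0 j k - W' j k) ^+ 2 <= (W0 j k - W j k) ^+ 2.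
  by rewrite mxE; case: ifP; rewrite ?subrr ?expr0n ?sqr_ge0.
rewrite /frob2 (bigD1 j0) //= [X in _ < X](bigD1 j0) //= ltr_leD ?ler_sum //.
  rewrite (bigD1 k0) //= [X in _ < X](bigD1 k0) //= ltr_leD ?ler_sum //.
  rewrite mxE grown subrr expr0n /= exprn_even_gt0 //= subr_eq0.
  by apply: contraTneq grown => ->; rewrite ltxx.
by move=> j _; apply: ler_sum.
Qed.

Lemma hsq_le W0 W : (forall j k, `|W j k| <= `|W0 j k|) ->
  forall j k, hsq W j k <= hsq W0 j k.
Proof.
move=> shrink j k; rewrite !mxE -[W j k ^+ 2]real_normK ?num_real //.
by rewrite -[W0 j k ^+ 2]real_normK ?num_real // lerXn2r ?nnegrE.
Qed.

End LogDetLevelSet.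

Theorem proposition1 (R : realType) (p : nat) (s lam : R)
  (Wt What Wstar : 'M[R]_p) :
  (1 <= p)%N -> 0 < s -> 0 < lam ->
  is_proj (Dset s) Wt What ->
  is_proj (Bball lam) What Wstar ->
  Wset s Wstar /\ h_s s Wstar = 0 /\ l1norm Wstar <= lam.
Proof.
case: p => [//|n] in Wt What Wstar *.
move=> _ s_gt0 _ [[What_W h_What] _] Wstar_proj.
have What_pos := Wset_det_pos_from s_gt0 What_W.
have det_What : \det (s%:M - hsq What) = s ^+ n.+1.
  by apply/h_s_eq0P => //; apply: What_pos.
have [_ _ /(_ det_What) char_What] := nnegmx_Mmatrix_spec (hsq_ge0 What) s_gt0 What_pos.
have Wstar_nil : hsq Wstar ^+ n.+1 = 0.
  apply: nilpotent_nnegmx_le (hsq_ge0 Wstar) _ (char_poly_X_nilpotent char_What).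
  exact/hsq_le/proj_l1ball_shrink/Wstar_proj.
have det_Wstar : \det (s%:M - hsq Wstar) = s ^+ n.+1.
  by rewrite -horner_char_poly (char_poly_nilpotent_rcf Wstar_nil) hornerXn.
split; first exact: Wset_nilpotent Wstar_nil.
by split; [apply/h_s_eq0P; rewrite ?det_Wstar ?exprn_gt0 | case: Wstar_proj].
Qed.
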